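(* Let $M$ be a faithful graded $R$-module and $U$ a proper graded submodule of $M$ such that $J_{gr}(M/U)$ is the zero submodule of $M/U$ and $J_{gr}(R)\subseteq (U:_RM)$. Then $U$ is a graded weakly $J_{gr}$-semiprime submodule of $M$ if and only if $(U:_RM)$ is a graded weakly $J_{gr}$-semiprime ideal of $R$.
   Context: Standing conventions: $\Gamma$ is a group, $R=\bigoplus_{g\in\Gamma}R_g$ is a commutative $\Gamma$-graded ring with identity, and $M=\bigoplus_{g\in\Gamma}M_g$ is a unitary $\Gamma$-graded $R$-module. $h(R)$, $h(M)$ are the homogeneous elements. A submodule $U$ is graded if $U=\bigoplus_g(U\cap M_g)$; $M/U$ has the induced grading. $M$ is faithful if $\mathrm{ann}_R(M)=\{r: rM=0\}=0$. $(U:_RM)=\{r\in R: rM\subseteq U\}$. For a graded module $N$, a graded submodule $U\neq N$ is Gr-maximal if every graded submodule between $U$ and $N$ equals $U$ or $N$; $J_{gr}(N)$ is the intersection of all Gr-maximal submodules of $N$ ($=N$ if none); $J_{gr}(R)$ is this for $N=R$. A proper graded submodule $U$ of $M$ is graded weakly $J_{gr}$-semiprime if whenever $r_g\in h(R)$, $m_h\in h(M)$, $n\in\mathbb{Z}^+$ and $0\neq r_g^nm_h\in U$, then $r_gm_h\in U+J_{gr}(M)$; a graded ideal of $R$ is graded weakly $J_{gr}$-semiprime if it is so as a submodule of the graded $R$-module $R$. *)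

From HB Require Import structures.
From mathcomp Require Import all_boot all_order all_algebra.
Set Implicit Arguments. Unset Strict Implicit. Unset Printing Implicit Defensive.
Import GRing.Theory.
Local Open Scope ring_scope.

Record group := Group {
  gcar :> Type;
  gmul : gcar -> gcar -> gcar;
  gone : gcar;
  ginv : gcar -> gcar;
  gmulA : forall x y z, gmul x (gmul y z) = gmul (gmul x y) z;
  gmul1 : forall x, gmul gone x = x;
  gmulV : forall x, gmul (ginv x) x = gone
}.

Section Graded.
Variable G : group.

Definition gr_addsubgroup (V : zmodType) (S : V -> Prop) : Prop :=
  S 0 /\ forall x y, S x -> S y -> S (x - y).

Definition is_direct_sum (V : zmodType) (S : G -> V -> Prop) : Prop :=
  (forall g, gr_addsubgroup (S g)) /\
  (forall x : V, exists n (gs : 'I_n -> G) (xs : 'I_n -> V),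
      injective gs /\ (forall i, S (gs i) (xs i)) /\ x = \sum_(i < n) xs i) /\
  (forall n (gs : 'I_n -> G) (xs : 'I_n -> V),
      injective gs -> (forall i, S (gs i) (xs i)) ->
      \sum_(i < n) xs i = 0 -> forall i, xs i = 0).

Definition graded_ring (R : comPzRingType) (Rg : G -> R -> Prop) : Prop :=
  is_direct_sum Rg /\
  forall g h (a b : R), Rg g a -> Rg h b -> Rg (gmul g h) (a * b).

Definition graded_module (R : comPzRingType) (Rg : G -> R -> Prop)
    (M : lmodType R) (Mg : G -> M -> Prop) : Prop :=
  is_direct_sum Mg /\
  forall g h (a : R) (m : M), Rg g a -> Mg h m -> Mg (gmul g h) (a *: m).

Variables (R : comPzRingType) (M : lmodType R) (Mg : G -> M -> Prop).

Definition gr_homogeneous (S : G -> M -> Prop) (x : M) : Prop := exists g, S g x.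

Definition gr_submod_closed (U : M -> Prop) : Prop :=
  U 0 /\ (forall x y, U x -> U y -> U (x - y)) /\
  (forall (r : R) x, U x -> U (r *: x)).

Definition graded_submodule (U : M -> Prop) : Prop :=
  gr_submod_closed U /\
  forall x, U x -> exists n (gs : 'I_n -> G) (xs : 'I_n -> M),
      injective gs /\ (forall i, Mg (gs i) (xs i) /\ U (xs i)) /\
      x = \sum_(i < n) xs i.

Definition gr_proper (U : M -> Prop) : Prop := exists x, ~ U x.

Definition gr_maximal (U : M -> Prop) : Prop :=
  graded_submodule U /\ gr_proper U /\
  forall V : M -> Prop, graded_submodule V -> (forall x, U x -> V x) ->
    (forall x, V x <-> U x) \/ (forall x, V x).

(* J_gr(M): intersection of all Gr-maximal submodules (= M if there is none). *)
Definition Jgr (x : M) : Prop := forall K, gr_maximal K -> K x.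

(* Preimage in M of J_gr(M/U): via the correspondence between graded
   submodules of M/U and graded submodules of M containing U. *)
Definition Jgr_quot (U : M -> Prop) (x : M) : Prop :=
  forall K, gr_maximal K -> (forall y, U y -> K y) -> K x.

Definition gr_colon (U : M -> Prop) (r : R) : Prop := forall m : M, U (r *: m).

Definition gr_faithful : Prop := forall r : R, (forall m : M, r *: m = 0) -> r = 0.

Definition gr_weakly_Jgr_semiprime (Rg : G -> R -> Prop) (U : M -> Prop) : Prop :=
  graded_submodule U /\ gr_proper U /\
  forall (r : R) (m : M) (n : nat),
    (exists g, Rg g r) -> gr_homogeneous Mg m -> (0 < n)%N ->
    r ^+ n *: m != 0 -> U (r ^+ n *: m) ->
    exists u j, U u /\ Jgr j /\ r *: m = u + j.

End Graded.

From HB Require Import structures.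
From Stdlib Require Import ClassicalEpsilon.
From mathcomp Require Import all_boot all_order all_algebra.
Set Implicit Arguments.
Unset Strict Implicit.
Unset Printing Implicit Defensive.

Import GRing.Theory.
Local Open Scope ring_scope.

(** A Gr-maximal submodule K is graded prime: if a homogeneous a and a
    homogeneous m outside K satisfy a m \in K, then K + R m is a graded
    submodule strictly containing K, hence all of M, so a M \subset K.
    Iterating, r^n m \in K forces r m \in K for homogeneous r and m, and this
    persists under intersections.  The hypothesis J_gr(M/U) = 0 says that U is
    the intersection of the Gr-maximal submodules containing it, so U is graded
    semiprime, and so is (U :_R M), by splitting elements of M into homogeneous
    components.  Hence both sides of the equivalence hold outright (with 0 as
    the J_gr-summand). *)

(* Regrouping components by degree needs equality on the group to be decidable. *)
Definition group_eqb (G : group) (x y : G) : bool := excluded_middle_informative (x = y).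

Lemma group_eqP (G : group) : Equality.axiom (@group_eqb G).
Proof.
by move=> x y; rewrite /group_eqb; case: excluded_middle_informative => h; constructor.
Qed.

HB.instance Definition _ (G : group) := hasDecEq.Build (gcar G) (@group_eqP G).

Section GroupLaws.
Variable G : group.

Lemma gmulVr (x : G) : gmul x (ginv x) = gone G.
Proof.
have E : gmul (ginv x) (gmul x (ginv x)) = ginv x by rewrite gmulA gmulV gmul1.
by rewrite -(gmul1 (gmul x (ginv x))) -(gmulV (ginv x)) -gmulA E gmulV.
Qed.

Lemma gmul1r (x : G) : gmul x (gone G) = x.
Proof. by rewrite -(gmulV x) gmulA gmulVr gmul1. Qed.

Lemma gmulIg (h : G) : injective (fun x : G => gmul x h).
Proof.
move=> x y /(congr1 (fun z : G => gmul z (ginv h))) /=.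
by rewrite -!gmulA gmulVr !gmul1r.
Qed.

End GroupLaws.

Section AddSubgroup.
Variables (V : zmodType) (P : V -> Prop).
Hypothesis P_sub : gr_addsubgroup P.

Lemma addsubgroupN x : P x -> P (- x).
Proof. by case: P_sub => P0 PB Px; rewrite -sub0r; apply: PB. Qed.

Lemma addsubgroupD x y : P x -> P y -> P (x + y).
Proof.
by case: P_sub => _ PB Px Py; rewrite -[y]opprK; apply/PB/addsubgroupN.
Qed.

Lemma addsubgroup_sum I (r : seq I) (Q : pred I) (F : I -> V) :
  (forall i, Q i -> P (F i)) -> P (\sum_(i <- r | Q i) F i).
Proof. by move=> PF; apply: big_ind => //; [case: P_sub | exact: addsubgroupD]. Qed.

End AddSubgroup.

Lemma submod_addsubgroup (R : comPzRingType) (M : lmodType R) (U : M -> Prop) :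
  gr_submod_closed U -> gr_addsubgroup U.
Proof. by case=> U0 [UB _]. Qed.

Lemma nth_ord_inj (T : eqType) (x0 : T) (s : seq T) :
  uniq s -> injective (fun k : 'I_(size s) => nth x0 s k).
Proof. by move=> s_uniq k1 k2 /eqP; rewrite nth_uniq // => /eqP /val_inj. Qed.

Lemma sum_by_degree (T : eqType) (V : nmodType) (I : finType) (deg : I -> T)
    (x : I -> V) (D : seq T) :
  uniq D -> (forall i, deg i \in D) ->
  \sum_(d <- D) \sum_(i | deg i == d) x i = \sum_i x i.
Proof.
move=> D_uniq D_deg; under eq_bigr do rewrite big_mkcond.
rewrite exchange_big; apply: eq_bigr => i _ /=.
rewrite (bigD1_seq _ (D_deg i) D_uniq) /= eqxx big1 ?addr0 // => d.
by rewrite eq_sym => /negbTE ->.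
Qed.

Section DirectSum.
Variables (G : group) (V : zmodType) (S : G -> V -> Prop).
Hypothesis S_direct : is_direct_sum S.

Lemma direct_sum_sum g I (r : seq I) (Q : pred I) (F : I -> V) :
  (forall i, Q i -> S g (F i)) -> S g (\sum_(i <- r | Q i) F i).
Proof. by case: S_direct => /(_ g) S_sub _; apply: addsubgroup_sum. Qed.

Lemma direct_sum_indep_seq (D : seq G) (z : G -> V) : uniq D ->
  (forall d, d \in D -> S d (z d)) -> \sum_(d <- D) z d = 0 ->
  forall d, d \in D -> z d = 0.
Proof.
move=> D_uniq Sz D0 d dD; case: S_direct => _ [_ indep].
have Sgs (k : 'I_(size D)) : S (nth d D k) (z (nth d D k)) by apply/Sz/mem_nth.
have := indep _ _ _ (nth_ord_inj (x0 := d) D_uniq) Sgs.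
rewrite -(big_mkord xpredT (fun k => z (nth d D k))) -(big_nth d xpredT z).
have dk : (index d D < size D)%N by rewrite index_mem.
by move=> /(_ D0 (Ordinal dk)) /=; rewrite nth_index.
Qed.

Lemma direct_sum_degree_parts_eq0 (I : finType) (deg : I -> G) (x : I -> V) :
  (forall i, S (deg i) (x i)) -> \sum_i x i = 0 ->
  forall d, \sum_(i | deg i == d) x i = 0.
Proof.
move=> Sx x0 d; pose D := undup (d :: [seq deg i | i <- enum I]).
have D_deg i : deg i \in D by rewrite mem_undup inE map_f ?mem_enum ?orbT.
apply: (@direct_sum_indep_seq D (fun e => \sum_(i | deg i == e) x i)).
- exact: undup_uniq.
- by move=> e _; rewrite big_seq_cond; apply: direct_sum_sum => i /andP [_ /eqP <-].
- by rewrite sum_by_degree ?undup_uniq.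
- by rewrite mem_undup mem_head.
Qed.

Lemma direct_sum_regroup (P : V -> Prop) (I : finType) (deg : I -> G) (x : I -> V) :
  gr_addsubgroup P -> (forall i, S (deg i) (x i) /\ P (x i)) ->
  exists n (gs : 'I_n -> G) (xs : 'I_n -> V),
    injective gs /\ (forall k, S (gs k) (xs k) /\ P (xs k)) /\
    \sum_i x i = \sum_(k < n) xs k.
Proof.
move=> P_sub Sx; pose D := undup [seq deg i | i <- enum I].
pose z d := \sum_(i | deg i == d) x i.
exists (size D), (fun k => nth (gone G) D k), (fun k => z (nth (gone G) D k)).
split; [exact/nth_ord_inj/undup_uniq | split].
- move=> k; split; rewrite /z big_seq_cond.
    by apply: direct_sum_sum => i /andP [_ /eqP <-]; case: (Sx i).
  by apply: addsubgroup_sum => // i _; case: (Sx i).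
- rewrite -(big_mkord xpredT (fun k => z (nth (gone G) D k))) -(big_nth _ xpredT z).
  by rewrite sum_by_degree ?undup_uniq // => i; rewrite mem_undup map_f ?mem_enum.
Qed.

End DirectSum.

Section GradedModule.
Variables (G : group) (R : comPzRingType) (M : lmodType R) (Mg : G -> M -> Prop).
Hypothesis Mg_direct : is_direct_sum Mg.

Lemma graded_submodule_component (U : M -> Prop) n (ds : 'I_n -> G) (vs : 'I_n -> M) :
  graded_submodule Mg U -> injective ds -> (forall i, Mg (ds i) (vs i)) ->
  U (\sum_i vs i) -> forall i, U (vs i).
Proof.
move=> [/submod_addsubgroup U_sub Udec] ds_inj Mvs.
move=> /Udec [m [fs [us [_ [Mus sum_eq]]]]] i.
pose deg p := match p with inl j => ds j | inr k => fs k end.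
pose x p := match p with inl j => vs j | inr k => - us k end.
have Mx p : Mg (deg p) (x p).
  by case: p => [j|k] /=; [exact: Mvs | exact: (addsubgroupN (Mg_direct.1 _) (Mus k).1)].
have x0 : \sum_p x p = 0 by rewrite big_sumType /= sumrN -sum_eq subrr.
have := direct_sum_degree_parts_eq0 Mg_direct Mx x0 (ds i).
rewrite big_sumType /= (big_pred1 i) => [/eqP|j]; last first.
  by apply/eqP/eqP => [/ds_inj | ->].
rewrite addr_eq0 => /eqP ->; apply/(addsubgroupN U_sub)/(addsubgroup_sum U_sub) => k _.
exact: (addsubgroupN U_sub (Mus k).2).
Qed.

End GradedModule.

Section GradedPrime.
Variables (G : group) (R : comPzRingType) (Rg : G -> R -> Prop).

Definition gr_semiprime (V : lmodType R) (Vg : G -> V -> Prop) (U : V -> Prop) : Prop :=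
  forall g h (r : R) (v : V) n, Rg g r -> Vg h v -> U (r ^+ n *: v) -> U (r *: v).

Lemma Jgr0 (V : lmodType R) (Vg : G -> V -> Prop) : Jgr Vg 0.
Proof. by move=> K [[[K0 _] _] _]. Qed.

Lemma gr_semiprime_weakly (V : lmodType R) (Vg : G -> V -> Prop) (U : V -> Prop) :
  graded_submodule Vg U -> gr_proper U -> gr_semiprime Vg U ->
  gr_weakly_Jgr_semiprime Vg Rg U.
Proof.
move=> U_gr U_proper U_semi; do 2!split=> //.
move=> r v n [g Rr] [h Vv] _ _ /(U_semi _ _ _ _ _ Rr Vv) Urv.
by exists (r *: v), 0; rewrite addr0; split=> //; split; first exact: Jgr0.
Qed.

Hypothesis Rg_graded : graded_ring Rg.
Variables (M : lmodType R) (Mg : G -> M -> Prop).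
Hypothesis Mg_graded : graded_module Rg Mg.

Lemma homogeneous_scale_exp g h (r : R) (m : M) n :
  Rg g r -> Mg h m -> exists h', Mg h' (r ^+ n *: m).
Proof.
move=> Rr Mm; elim: n => [|n [h' Mrm]]; first by exists h; rewrite scale1r.
by exists (gmul g h'); rewrite exprS -scalerA; apply: Mg_graded.2.
Qed.

Definition add_cyclic (K : M -> Prop) (m x : M) : Prop :=
  exists k r, K k /\ x = k + r *: m.

Lemma add_cyclic_sub (K : M -> Prop) m x : K x -> add_cyclic K m x.
Proof. by move=> Kx; exists x, 0; rewrite scale0r addr0. Qed.

Lemma add_cyclic_scale (K : M -> Prop) m r : K 0 -> add_cyclic K m (r *: m).
Proof. by move=> K0; exists 0, r; rewrite add0r. Qed.

Lemma add_cyclic_submod (K : M -> Prop) m :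
  gr_submod_closed K -> gr_submod_closed (add_cyclic K m).
Proof.
move=> [K0 [KB KZ]]; split; first exact: add_cyclic_sub.
split=> [x y [k1 [r1 [K1 ->]]] [k2 [r2 [K2 ->]]] | r x [k [r1 [Kk ->]]]].
  by exists (k1 - k2), (r1 - r2); rewrite scalerBl opprD addrACA; split; first exact: KB.
by exists (r *: k), (r * r1); rewrite scalerDr scalerA; split; first exact: KZ.
Qed.

Lemma graded_add_cyclic (K : M -> Prop) h m :
  graded_submodule Mg K -> Mg h m -> graded_submodule Mg (add_cyclic K m).
Proof.
move=> [K_sub Kdec] Mm; have W_sub := add_cyclic_submod m K_sub.
split=> // _ [k [r [/Kdec [n [fs [ks [_ [Kks ->]]]]] ->]]].
have [_ [Rdec _]] := Rg_graded.1.
have [n' [gs [rs [_ [Rrs ->]]]]] := Rdec r.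
pose deg p := match p with inl i => fs i | inr j => gmul (gs j) h end.
pose x p := match p with inl i => ks i | inr j => rs j *: m end.
have Mx p : Mg (deg p) (x p) /\ add_cyclic K m (x p).
  case: p => [i|j] /=; first by have [? ?] := Kks i; split; last exact: add_cyclic_sub.
  by split; [exact: Mg_graded.2 | exact: add_cyclic_scale K_sub.1].
have := direct_sum_regroup Mg_graded.1 (submod_addsubgroup W_sub) Mx.
by rewrite big_sumType /= -scaler_suml.
Qed.

Lemma gr_maximal_prime (K : M -> Prop) g h a m :
  gr_maximal Mg K -> Rg g a -> Mg h m -> K (a *: m) ->
  K m \/ forall x, K (a *: x).
Proof.
move=> [K_gr [_ K_max]] Ra Mm Kam.
have [Km | nKm] := classic (K m); [by left | right].
have [K_sub _] := K_gr.
case: (K_max _ (graded_add_cyclic K_gr Mm) (@add_cyclic_sub K m)) => [W_K | W_all].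
  by case: nKm; apply/W_K; have := @add_cyclic_scale K m 1 K_sub.1; rewrite scale1r.
move=> x; have [k [r [Kk ->]]] := W_all x.
rewrite scalerDr scalerA mulrC -scalerA.
by apply: (addsubgroupD (submod_addsubgroup K_sub)); apply: K_sub.2.2.
Qed.

Lemma gr_maximal_semiprime (K : M -> Prop) : gr_maximal Mg K -> gr_semiprime Mg K.
Proof.
move=> K_max g h r m n Rr Mm; elim: n => [|n IH].
  by rewrite expr0 scale1r; apply: K_max.1.1.2.2.
rewrite exprS -scalerA; have [h' Mrm] := homogeneous_scale_exp n Rr Mm.
by case/(gr_maximal_prime K_max Rr Mrm) => [/IH|]; last apply.
Qed.

Lemma Jgr_quot_semiprime (U : M -> Prop) :
  (forall x, Jgr_quot Mg U x -> U x) -> gr_semiprime Mg U.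
Proof.
move=> UJ g h r m n Rr Mm Urm; apply: UJ => K K_max UK.
exact: (gr_maximal_semiprime K_max Rr Mm (UK _ Urm)).
Qed.

Lemma colon_submod (U : M -> Prop) :
  gr_submod_closed U -> gr_submod_closed (gr_colon U : R^o -> Prop).
Proof.
move=> [U0 [UB UZ]]; split; first by move=> m; rewrite scale0r.
split=> [r s Ur Us m | r s Us m]; first by rewrite scalerBl; apply: UB.
by rewrite -scalerA; apply: UZ.
Qed.

Lemma graded_colon (U : M -> Prop) :
  graded_submodule Mg U -> graded_submodule (Rg : G -> R^o -> Prop) (gr_colon U).
Proof.
move=> U_gr; split; first exact: colon_submod U_gr.1.
move=> r Ur; have [_ [Rdec _]] := Rg_graded.1.
have [n [gs [rs [gs_inj [Rrs r_eq]]]]] := Rdec r.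
exists n, gs, rs; split=> //; split=> // i; split=> // m.
have [_ [Mdec _]] := Mg_graded.1.
have [n' [hs [ms [_ [Mms ->]]]]] := Mdec m.
rewrite scaler_sumr; apply: (addsubgroup_sum (submod_addsubgroup U_gr.1)) => j _.
apply: (@graded_submodule_component _ _ _ _ Mg_graded.1 _ _
  (fun i => gmul (gs i) (hs j)) (fun i => rs i *: ms j) U_gr).
- by move=> i1 i2 /gmulIg /gs_inj.
- by move=> i'; apply: Mg_graded.2.
- by rewrite -scaler_suml -r_eq; apply: Ur.
Qed.

Lemma colon_proper (U : M -> Prop) : gr_proper U -> gr_proper (gr_colon U : R^o -> Prop).
Proof. by move=> [x nUx]; exists 1 => /(_ x); rewrite scale1r. Qed.

Lemma colon_semiprime (U : M -> Prop) :
  gr_submod_closed U -> gr_semiprime Mg U ->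
  gr_semiprime (Rg : G -> R^o -> Prop) (gr_colon U).
Proof.
move=> U_sub U_semi g h r s n Rr Rs Ursn m.
have [_ [Mdec _]] := Mg_graded.1.
have [n' [hs [ms [_ [Mms ->]]]]] := Mdec m.
rewrite scaler_sumr; apply: (addsubgroup_sum (submod_addsubgroup U_sub)) => j _.
rewrite -scalerA; apply: (U_semi _ _ _ _ n Rr (Mg_graded.2 _ _ _ _ Rs (Mms j))).
by rewrite scalerA; apply: Ursn.
Qed.

End GradedPrime.

Theorem theorem2p19 (G : group) (R : comPzRingType) (Rg : G -> R -> Prop)
    (M : lmodType R) (Mg : G -> M -> Prop) (U : M -> Prop) :
  graded_ring Rg -> graded_module Rg Mg ->
  gr_faithful M ->
  graded_submodule Mg U -> gr_proper U ->
  (forall x : M, Jgr_quot Mg U x -> U x) ->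
  (forall r : R, Jgr (Rg : G -> R^o -> Prop) r -> gr_colon U r) ->
  gr_weakly_Jgr_semiprime Mg Rg U <->
  gr_weakly_Jgr_semiprime (Rg : G -> R^o -> Prop) Rg (gr_colon U : R^o -> Prop).
Proof.
move=> Rg_graded Mg_graded _ U_gr U_proper UJ _.
have U_semi := Jgr_quot_semiprime Rg_graded Mg_graded UJ.
split=> _; apply: gr_semiprime_weakly => //.
- exact (graded_colon Rg_graded Mg_graded U_gr).
- exact: colon_proper.
- exact (colon_semiprime Mg_graded U_gr.1 U_semi).
Qed.
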